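(* Let $n\ge0$ and $k\ge1$ be integers, $\rho\ne0$ real, $0\le q<1$, and $z$ a complex number. Then $$\widehat c_{n,\rho,q}^{(k)}(z)=(-1)^n\sum_{m=0}^n S_1(n,m)\rho^{n-m}\sum_{i=0}^m\binom{m}{i}\frac{(-z)^i}{[m-i+1]_q^k}=(-1)^n\sum_{m=0}^n S_1\!\left(n,m,-\frac{z}{\rho}\right)\frac{\rho^{n-m}}{[m+1]_q^k}.$$
   Context: For real $0\le q<1$ (with $0^0=1$), $[x]_q=\frac{1-q^x}{1-q}$. Jackson's $q$-integral: $\int_0^1 f(x)\,d_qx=(1-q)\sum_{j\ge0} f(q^j)q^j$; multiple integrals are iterated. $(x)_n=x(x-1)\cdots(x-n+1)$, $(x)_0=1$. The $q$-poly-Cauchy polynomials of the second kind with parameter $\rho$ are $$\widehat c_{n,\rho,q}^{(k)}(z)=\rho^n\underbrace{\int_0^1\cdots\int_0^1}_{k}\left(\frac{-x_1\cdots x_k+z}{\rho}\right)_n d_qx_1\cdots d_qx_k.$$ The unsigned Stirling numbers of the first kind are defined by $x(x+1)\cdots(x+n-1)=\sum_{m=0}^n S_1(n,m)x^m$. The weighted Stirling numbers of the first kind $S_1(n,m,x)$ are defined by $\frac{(1-t)^{-x}(-\ln(1-t))^m}{m!}=\sum_{n\ge0} S_1(n,m,x)\frac{t^n}{n!}$. *)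

From Stdlib Require Import Reals List ClassicalEpsilon Factorial.
Open Scope R_scope.

Record Cx : Type := mkC { Re : R ; Im : R }.

Definition RtoC (r : R) : Cx := mkC r 0.
Definition C0 : Cx := RtoC 0.
Definition C1 : Cx := RtoC 1.
Definition Cadd (a b : Cx) : Cx := mkC (Re a + Re b) (Im a + Im b).
Definition Copp (a : Cx) : Cx := mkC (- Re a) (- Im a).
Definition Csub (a b : Cx) : Cx := Cadd a (Copp b).
Definition Cmul (a b : Cx) : Cx :=
  mkC (Re a * Re b - Im a * Im b) (Re a * Im b + Im a * Re b).
Definition Cscal (r : R) (a : Cx) : Cx := mkC (r * Re a) (r * Im a).
Fixpoint Cpow (a : Cx) (n : nat) : Cx :=
  match n with O => C1 | S n' => Cmul a (Cpow a n') end.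

(* csum f n = f 0 + f 1 + ... + f n   (n+1 terms) *)
Fixpoint csum (f : nat -> Cx) (n : nat) : Cx :=
  match n with O => f O | S n' => Cadd (csum f n') (f n) end.

(* finite product over i = 0 .. n-1 *)
Fixpoint cprod (f : nat -> Cx) (n : nat) : Cx :=
  match n with O => C1 | S n' => Cmul (cprod f n') (f n') end.

Definition qnum (q : R) (x : nat) : R := (1 - q ^ x) / (1 - q).

Definition cfall (x : Cx) (n : nat) : Cx :=
  cprod (fun i => Csub x (RtoC (INR i))) n.

Definition jackson_partial (q : R) (f : R -> Cx) (N : nat) : Cx :=
  Cscal (1 - q) (csum (fun j => Cscal (q ^ j) (f (q ^ j))) N).

Definition jackson_has_value (q : R) (f : R -> Cx) (L : Cx) : Prop :=
  Un_cv (fun N => Re (jackson_partial q f N)) (Re L) /\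
  Un_cv (fun N => Im (jackson_partial q f N)) (Im L).

Definition qint (q : R) (f : R -> Cx) : Cx :=
  epsilon (inhabits C0) (fun L => jackson_has_value q f L).

(* k-fold iterated Jackson integral.  The integrand receives the list
   [x_k; ...; x_1]; the outermost integral is in x_k, the innermost in x_1,
   i.e. \int_0^1 ... \int_0^1 F d_q x_1 ... d_q x_k. *)
Fixpoint qmint (q : R) (k : nat) (F : list R -> Cx) : Cx :=
  match k with
  | O => F nil
  | S k' => qint q (fun x => qmint q k' (fun xs => F (x :: xs)))
  end.

Definition prodl (xs : list R) : R := fold_right Rmult 1 xs.

Definition qpolyCauchy2 (n : nat) (rho q : R) (k : nat) (z : Cx) : Cx :=
  Cscal (rho ^ n)
    (qmint q k (fun xs => cfall (Cscal (/ rho) (Cadd (RtoC (- prodl xs)) z)) n)).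

(* polynomials with natural coefficients as coefficient sequences *)
Fixpoint nsum (f : nat -> nat) (n : nat) : nat :=
  match n with O => f O | S n' => (nsum f n' + f n)%nat end.
Definition npoly_mul (p r : nat -> nat) : nat -> nat :=
  fun m => nsum (fun i => (p i * r (m - i))%nat) m.
Definition npoly_lin (c : nat) : nat -> nat :=
  fun m => match m with O => c | 1%nat => 1%nat | _ => 0%nat end.
Fixpoint rising_poly (n : nat) : nat -> nat :=
  match n with
  | O => fun m => match m with O => 1%nat | _ => 0%nat end
  | S n' => npoly_mul (rising_poly n') (npoly_lin n')
  end.
(* x(x+1)...(x+n-1) = sum_m S1(n,m) x^m *)
Definition S1 (n m : nat) : nat := rising_poly n m.

(* formal power series in t with complex coefficients *)
Definition fps_mul (a b : nat -> Cx) : nat -> Cx :=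
  fun n => csum (fun i => Cmul (a i) (b (n - i)%nat)) n.
Fixpoint fps_pow (a : nat -> Cx) (m : nat) : nat -> Cx :=
  match m with
  | O => fun n => match n with O => C1 | _ => C0 end
  | S m' => fps_mul a (fps_pow a m')
  end.
(* (1-t)^{-x} = sum_j binom(-x, j) (-t)^j  (Newton's binomial series) *)
Definition fps_binom_neg (x : Cx) : nat -> Cx :=
  fun j => Cscal ((-1) ^ j / INR (fact j)) (cfall (Copp x) j).
(* -ln(1-t) = sum_{j>=1} t^j / j *)
Definition fps_mlog1m : nat -> Cx :=
  fun j => match j with O => C0 | _ => RtoC (/ INR j) end.
(* (1-t)^{-x} (-ln(1-t))^m / m! = sum_n S1(n,m,x) t^n / n! *)
Definition S1w (n m : nat) (x : Cx) : Cx :=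
  Cscal (INR (fact n) / INR (fact m))
    (fps_mul (fps_binom_neg x) (fps_pow fps_mlog1m m) n).

(* Expanding the falling factorial in powers of the product [X = x_1 ... x_k] turns the
   integrand into a finite sum of monomials [X^e].  The Jackson integral of [x^e] is a
   geometric series with value [1/[e+1]_q], so the k-fold integral of [X^e] is
   [1/[e+1]_q^k].  The expansion comes from [(w)_n = (-1)^n (-w)(-w+1)...(-w+n-1)]: with
   [-w = (X - z)/rho], the Stirling numbers and the binomial theorem give the first formula;
   with [-w = -z/rho + X/rho], the weighted Stirling numbers give the second, because they obey
   the recurrence [S1(n+1,m+1,x) = (x+n) S1(n,m+1,x) + S1(n,m,x)] of the product of the linear
   factors [x + i].  That recurrence is read off the generating function
   [(1-t)^(-x) (-ln(1-t))^m] with the operator [(1-t) d/dt]. *)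

From Stdlib Require Import Reals Lra Lia ClassicalEpsilon FunctionalExtensionality Factorial.
Open Scope R_scope.

Lemma Cx_eq (a b : Cx) : Re a = Re b -> Im a = Im b -> a = b.
Proof. destruct a, b; simpl; intros -> ->; reflexivity. Qed.

Lemma Re_add a b : Re (Cadd a b) = Re a + Re b. Proof. reflexivity. Qed.
Lemma Im_add a b : Im (Cadd a b) = Im a + Im b. Proof. reflexivity. Qed.
Lemma Re_mul a b : Re (Cmul a b) = Re a * Re b - Im a * Im b. Proof. reflexivity. Qed.
Lemma Im_mul a b : Im (Cmul a b) = Re a * Im b + Im a * Re b. Proof. reflexivity. Qed.
Lemma Re_scal r a : Re (Cscal r a) = r * Re a. Proof. reflexivity. Qed.
Lemma Im_scal r a : Im (Cscal r a) = r * Im a. Proof. reflexivity. Qed.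
Lemma Re_opp a : Re (Copp a) = - Re a. Proof. reflexivity. Qed.
Lemma Im_opp a : Im (Copp a) = - Im a. Proof. reflexivity. Qed.
Lemma Re_sub a b : Re (Csub a b) = Re a - Re b. Proof. reflexivity. Qed.
Lemma Im_sub a b : Im (Csub a b) = Im a - Im b. Proof. reflexivity. Qed.
Lemma Re_RtoC r : Re (RtoC r) = r. Proof. reflexivity. Qed.
Lemma Im_RtoC r : Im (RtoC r) = 0. Proof. reflexivity. Qed.
Lemma Re_C0 : Re C0 = 0. Proof. reflexivity. Qed.
Lemma Im_C0 : Im C0 = 0. Proof. reflexivity. Qed.
Lemma Re_C1 : Re C1 = 1. Proof. reflexivity. Qed.
Lemma Im_C1 : Im C1 = 0. Proof. reflexivity. Qed.

Global Hint Rewrite Re_add Im_add Re_mul Im_mul Re_scal Im_scal Re_opp Im_opp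
  Re_sub Im_sub Re_RtoC Im_RtoC Re_C0 Im_C0 Re_C1 Im_C1 : cx.

Ltac Cring := apply Cx_eq; autorewrite with cx; ring.

Lemma Cscal_Cscal r s a : Cscal r (Cscal s a) = Cscal (r * s) a.
Proof. Cring. Qed.

Lemma Cpow_scal r a m : Cpow (Cscal r a) m = Cscal (r ^ m) (Cpow a m).
Proof. induction m as [|m IH]; simpl; [|rewrite IH]; Cring. Qed.

Lemma Cpow_RtoC r m : Cpow (RtoC r) m = RtoC (r ^ m).
Proof. induction m as [|m IH]; simpl; [|rewrite IH]; Cring. Qed.

Lemma Re_csum f n : Re (csum f n) = sum_f_R0 (fun i => Re (f i)) n.
Proof. induction n as [|n IH]; simpl; [|rewrite IH]; reflexivity. Qed.

Lemma Im_csum f n : Im (csum f n) = sum_f_R0 (fun i => Im (f i)) n.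
Proof. induction n as [|n IH]; simpl; [|rewrite IH]; reflexivity. Qed.

Lemma csum_ext f g n : (forall i, (i <= n)%nat -> f i = g i) -> csum f n = csum g n.
Proof.
  induction n as [|n IH]; intros H; simpl; [apply H; lia|].
  rewrite IH, H; auto.
Qed.

Lemma csumS_l f n : csum f (S n) = Cadd (f 0%nat) (csum (fun i => f (S i)) n).
Proof. induction n as [|n IH]; [reflexivity|]. cbn [csum] in *. rewrite IH. Cring. Qed.

Lemma csum_add f g n : csum (fun i => Cadd (f i) (g i)) n = Cadd (csum f n) (csum g n).
Proof. induction n as [|n IH]; simpl; [|rewrite IH]; Cring. Qed.

Lemma csum_sub f g n : csum (fun i => Csub (f i) (g i)) n = Csub (csum f n) (csum g n).
Proof. induction n as [|n IH]; simpl; [|rewrite IH]; Cring. Qed.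

Lemma csum_mull a f n : Cmul a (csum f n) = csum (fun i => Cmul a (f i)) n.
Proof. induction n as [|n IH]; simpl; [|rewrite <- IH]; Cring. Qed.

Lemma csum_scal r f n : Cscal r (csum f n) = csum (fun i => Cscal r (f i)) n.
Proof. induction n as [|n IH]; simpl; [|rewrite <- IH]; Cring. Qed.

Lemma csum_eq0 f n : (forall i, (i <= n)%nat -> f i = C0) -> csum f n = C0.
Proof.
  induction n as [|n IH]; intros H; simpl; [apply H; lia|].
  rewrite IH, H by (auto; intros; apply H; lia). Cring.
Qed.

Lemma csum_first f n : (forall i, (1 <= i <= n)%nat -> f i = C0) -> csum f n = f 0%nat.
Proof.
  destruct n as [|n]; intros H; [reflexivity|].
  rewrite csumS_l, csum_eq0 by (intros; apply H; lia). Cring.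
Qed.

Lemma csum_swap (f : nat -> nat -> Cx) N M :
  csum (fun j => csum (fun m => f j m) M) N = csum (fun m => csum (fun j => f j m) N) M.
Proof.
  induction N as [|N IH]; [reflexivity|].
  cbn [csum]. rewrite IH, <- csum_add. reflexivity.
Qed.

Lemma Un_cv_const c : Un_cv (fun _ => c) c.
Proof.
  intros eps Heps. exists 0%nat. intros. unfold Rdist.
  rewrite Rminus_diag, Rabs_R0. lra.
Qed.

Lemma Un_cv_sum (u : nat -> nat -> R) (l : nat -> R) M :
  (forall m, (m <= M)%nat -> Un_cv (fun N => u N m) (l m)) ->
  Un_cv (fun N => sum_f_R0 (u N) M) (sum_f_R0 l M).
Proof.
  induction M as [|M IH]; intros H; simpl; [apply H; lia|].
  apply CV_plus; [apply IH; intros; apply H|apply H]; lia.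
Qed.

Lemma jackson_has_value_unique q f L L' :
  jackson_has_value q f L -> jackson_has_value q f L' -> L = L'.
Proof.
  intros [HRe HIm] [HRe' HIm'].
  apply Cx_eq; eapply UL_sequence; eassumption.
Qed.

Lemma qint_eq q f L : jackson_has_value q f L -> qint q f = L.
Proof.
  intros HL. apply (jackson_has_value_unique q f); [|exact HL].
  exact (epsilon_spec (inhabits C0) _ (ex_intro _ L HL)).
Qed.

Lemma jackson_partial_csum q (F : nat -> R -> Cx) n N :
  jackson_partial q (fun x => csum (fun i => F i x) n) N =
  csum (fun i => jackson_partial q (F i) N) n.
Proof.
  unfold jackson_partial.
  rewrite (csum_ext _ (fun j => csum (fun i => Cscal (q ^ j) (F i (q ^ j))) n))
    by (intros; apply csum_scal).
  rewrite csum_swap, csum_scal. reflexivity.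
Qed.

Lemma jackson_has_value_csum q (F : nat -> R -> Cx) (L : nat -> Cx) n :
  (forall i, (i <= n)%nat -> jackson_has_value q (F i) (L i)) ->
  jackson_has_value q (fun x => csum (fun i => F i x) n) (csum L n).
Proof.
  intros HF. split.
  - apply (Un_cv_ext (fun N => sum_f_R0 (fun i => Re (jackson_partial q (F i) N)) n)).
    { intros N. rewrite jackson_partial_csum, Re_csum. reflexivity. }
    rewrite Re_csum. apply Un_cv_sum. intros i Hi. apply HF, Hi.
  - apply (Un_cv_ext (fun N => sum_f_R0 (fun i => Im (jackson_partial q (F i) N)) n)).
    { intros N. rewrite jackson_partial_csum, Im_csum. reflexivity. }
    rewrite Im_csum. apply Un_cv_sum. intros i Hi. apply HF, Hi.
Qed.

(* The Jackson sum of [x^e] is the geometric series in [q^(e+1)]. *)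
Lemma jackson_monomial_cv q e r : 0 <= q < 1 ->
  Un_cv (fun N => (1 - q) * sum_f_R0 (fun j => q ^ j * ((q ^ j) ^ e * r)) N)
    (/ qnum q (e + 1) * r).
Proof.
  intros Hq.
  assert (Hqe : 0 <= q ^ S e < 1) by (apply pow_lt_1_compat; [exact Hq | lia]).
  replace (/ qnum q (e + 1)) with ((1 - q) * / (1 - q ^ S e)).
  2:{ unfold qnum. rewrite Nat.add_1_r. field. lra. }
  apply (Un_cv_ext (fun N => (1 - q) * sum_f_R0 (fun j => 1 * (q ^ S e) ^ j) N * r)).
  { intros N. rewrite Rmult_assoc. f_equal. rewrite (Rmult_comm _ r), scal_sum.
    apply sum_eq. intros j _. rewrite <- !pow_mult.
    replace (S e * j)%nat with (j + j * e)%nat by lia. rewrite pow_add. ring. }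
  apply CV_mult; [apply CV_mult|]; try apply Un_cv_const.
  apply GP_infinite. rewrite Rabs_right; lra.
Qed.

Lemma jackson_has_value_monomial q e c : 0 <= q < 1 ->
  jackson_has_value q (fun x => Cscal (x ^ e) c) (Cscal (/ qnum q (e + 1)) c).
Proof.
  intros Hq. split; simpl; eapply Un_cv_ext; try apply (jackson_monomial_cv q e _ Hq);
    intros N; unfold jackson_partial; autorewrite with cx;
    rewrite ?Re_csum, ?Im_csum; reflexivity.
Qed.

Definition monomial_sum (n : nat) (D : nat -> nat) (e : nat -> nat -> nat)
    (c : nat -> nat -> Cx) (y : R) : Cx :=
  csum (fun m => csum (fun i => Cscal (y ^ e m i) (c m i)) (D m)) n.

Lemma qint_monomial_sum q n D e c : 0 <= q < 1 ->
  qint q (monomial_sum n D e c) =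
  csum (fun m => csum (fun i => Cscal (/ qnum q (e m i + 1)) (c m i)) (D m)) n.
Proof.
  intros Hq. apply qint_eq.
  apply jackson_has_value_csum. intros m _.
  apply (jackson_has_value_csum q (fun i x => Cscal (x ^ e m i) (c m i))). intros i _.
  apply jackson_has_value_monomial, Hq.
Qed.

Lemma qmint_monomial_sum q k : 0 <= q < 1 -> forall n D e c,
  qmint q k (fun xs => monomial_sum n D e c (prodl xs)) =
  csum (fun m => csum (fun i => Cscal (/ qnum q (e m i + 1) ^ k) (c m i)) (D m)) n.
Proof.
  intros Hq. induction k as [|k IH]; intros n D e c.
  - apply csum_ext. intros m _. apply csum_ext. intros i _.
    simpl. rewrite pow1, Rinv_1. reflexivity.
  - assert (Hinner : forall x,
      qmint q k (fun xs => monomial_sum n D e c (prodl (x :: xs))) =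
      monomial_sum n D e (fun m i => Cscal (/ qnum q (e m i + 1) ^ k) (c m i)) x).
    { intros x.
      transitivity (qmint q k (fun xs =>
        monomial_sum n D e (fun m i => Cscal (x ^ e m i) (c m i)) (prodl xs))).
      { f_equal. apply functional_extensionality. intros xs.
        apply csum_ext. intros m _. apply csum_ext. intros i _.
        simpl. rewrite Rpow_mult_distr. Cring. }
      rewrite IH. apply csum_ext. intros m _. apply csum_ext. intros i _. Cring. }
    cbn [qmint]. rewrite (functional_extensionality _ _ Hinner), qint_monomial_sum by exact Hq.
    apply csum_ext. intros m _. apply csum_ext. intros i _.
    rewrite Cscal_Cscal, <- Rinv_mult. reflexivity.
Qed.

Section LinearFactors.

Variables (u : nat -> Cx) (s : nat -> nat -> Cx).
Hypothesis s_0_0 : s 0%nat 0%nat = C1.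
Hypothesis s_0_S : forall m, s 0%nat (S m) = C0.
Hypothesis s_S_0 : forall n, s (S n) 0%nat = Cmul (u n) (s n 0%nat).
Hypothesis s_S_S : forall n m, s (S n) (S m) = Cadd (Cmul (u n) (s n (S m))) (s n m).

Lemma linear_factors_coef_eq0 n m : (n < m)%nat -> s n m = C0.
Proof.
  revert m. induction n as [|n IH]; intros m Hm; destruct m as [|m]; try lia.
  - apply s_0_S.
  - rewrite s_S_S, !IH by lia. Cring.
Qed.

(* [s n m] is the elementary symmetric function of degree [n - m] in [u 0, ..., u (n-1)]. *)
Lemma cprod_linear_factors y n :
  cprod (fun i => Cadd y (u i)) n = csum (fun m => Cmul (s n m) (Cpow y m)) n.
Proof.
  induction n as [|n IH]; cbn [cprod]; [simpl; rewrite s_0_0; Cring|].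
  rewrite IH.
  set (P := csum (fun m => Cmul (s n m) (Cpow y m)) n).
  assert (HPy : Cmul P y = csum (fun m => Cmul (s n m) (Cpow y (S m))) n).
  { transitivity (Cmul y P); [Cring|].
    unfold P. rewrite csum_mull. apply csum_ext. intros. simpl. Cring. }
  assert (HP : P = csum (fun m => Cmul (s n m) (Cpow y m)) (S n)).
  { cbn [csum]. rewrite linear_factors_coef_eq0 by lia. fold P. Cring. }
  transitivity (Cadd (Cmul (u n) P) (Cmul P y)); [Cring|].
  rewrite HPy, HP, !csumS_l, s_S_0.
  rewrite (csum_ext (fun i => Cmul (s (S n) (S i)) (Cpow y (S i)))
    (fun m => Cadd (Cmul (u n) (Cmul (s n (S m)) (Cpow y (S m))))
                   (Cmul (s n m) (Cpow y (S m))))) by (intros; rewrite s_S_S; Cring).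
  rewrite csum_add, <- csum_mull. simpl Cpow. Cring.
Qed.

End LinearFactors.

Lemma nsum_mul_npoly_lin (p : nat -> nat) c m j : (j <= m)%nat ->
  nsum (fun i => (p i * npoly_lin c (S m - i))%nat) j = if Nat.eqb j m then p m else 0%nat.
Proof.
  induction j as [|j IH]; intros Hj.
  - destruct m; simpl; lia.
  - cbn [nsum]. rewrite IH by lia.
    replace (Nat.eqb j m) with false by (symmetry; apply Nat.eqb_neq; lia).
    destruct (Nat.eqb_spec (S j) m) as [<-|Hjm].
    + replace (S (S j) - S j)%nat with 1%nat by lia. simpl. lia.
    + replace (S m - S j)%nat with (S (S (m - S j - 1))) by lia. simpl. lia.
Qed.

Lemma S1_S_0 n : S1 (S n) 0 = (S1 n 0 * n)%nat.
Proof. unfold S1. cbn [rising_poly]. unfold npoly_mul. simpl. lia. Qed.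

Lemma S1_S_S n m : S1 (S n) (S m) = (S1 n (S m) * n + S1 n m)%nat.
Proof.
  unfold S1. cbn [rising_poly]. unfold npoly_mul. cbn [nsum].
  rewrite nsum_mul_npoly_lin, Nat.eqb_refl, Nat.sub_diag by lia. simpl. lia.
Qed.

Lemma rising_factorial_S1 v n :
  cprod (fun i => Cadd v (RtoC (INR i))) n =
  csum (fun m => Cscal (INR (S1 n m)) (Cpow v m)) n.
Proof.
  rewrite (cprod_linear_factors (fun i => RtoC (INR i)) (fun n m => RtoC (INR (S1 n m)))).
  - apply csum_ext. intros. Cring.
  - reflexivity.
  - reflexivity.
  - intros. rewrite S1_S_0, mult_INR. Cring.
  - intros. rewrite S1_S_S, plus_INR, mult_INR. Cring.
Qed.

Lemma binomial_C_n_0 n : Binomial.C n 0 = 1.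
Proof.
  unfold Binomial.C. rewrite Nat.sub_0_r. simpl INR. field. apply INR_fact_neq_0.
Qed.

Lemma binomial_C_n_n n : Binomial.C n n = 1.
Proof.
  unfold Binomial.C. rewrite Nat.sub_diag. simpl INR. field. apply INR_fact_neq_0.
Qed.

Lemma cprod_const a n : cprod (fun _ => a) n = Cpow a n.
Proof. induction n as [|n IH]; cbn [cprod Cpow]; [|rewrite IH]; Cring. Qed.

(* The guard avoids the junk value [Binomial.C n m <> 0] for [m > n]. *)
Lemma Cpow_add_binomial a p m :
  Cpow (Cadd a (RtoC p)) m =
  csum (fun i => Cscal (Binomial.C m i * p ^ (m - i)) (Cpow a i)) m.
Proof.
  rewrite <- cprod_const.
  rewrite (cprod_linear_factors (fun _ => RtoC p)
    (fun n i => RtoC (if Nat.leb i n then Binomial.C n i * p ^ (n - i) else 0))).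
  - apply csum_ext. intros i Hi. apply Nat.leb_le in Hi. rewrite Hi. Cring.
  - simpl. rewrite binomial_C_n_0. Cring.
  - reflexivity.
  - intros n. simpl. rewrite !binomial_C_n_0, Nat.sub_0_r. Cring.
  - intros n i.
    destruct (Nat.leb_spec (S i) (S n)), (Nat.leb_spec (S i) n), (Nat.leb_spec i n);
      try lia.
    + rewrite <- pascal by lia.
      replace (S n - S i)%nat with (S (n - S i)) by lia.
      replace (n - i)%nat with (S (n - S i)) by lia. simpl. Cring.
    + replace i with n by lia. rewrite !binomial_C_n_n, !Nat.sub_diag. simpl. Cring.
    + Cring.
Qed.

Definition fps_deriv (a : nat -> Cx) (n : nat) : Cx := Cscal (INR (S n)) (a (S n)).
Definition fps_mulX (a : nat -> Cx) (n : nat) : Cx :=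
  match n with O => C0 | S n' => a n' end.
(* Coefficients of [(1 - t) a'(t)]; on [(1-t)^(-x)] and [-ln(1-t)] it acts by [x] and [1]. *)
Definition fps_omX_deriv (a : nat -> Cx) (n : nat) : Cx :=
  Csub (fps_deriv a n) (fps_mulX (fps_deriv a) n).

Lemma fps_mul_ext a a' b b' : (forall n, a n = a' n) -> (forall n, b n = b' n) ->
  forall n, fps_mul a b n = fps_mul a' b' n.
Proof. intros Ha Hb n. apply csum_ext. intros. rewrite Ha, Hb. reflexivity. Qed.

Lemma fps_mul_subl a a' b n :
  fps_mul (fun k => Csub (a k) (a' k)) b n = Csub (fps_mul a b n) (fps_mul a' b n).
Proof. unfold fps_mul. rewrite <- csum_sub. apply csum_ext. intros. Cring. Qed.

Lemma fps_mul_subr a b b' n :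
  fps_mul a (fun k => Csub (b k) (b' k)) n = Csub (fps_mul a b n) (fps_mul a b' n).
Proof. unfold fps_mul. rewrite <- csum_sub. apply csum_ext. intros. Cring. Qed.

Lemma fps_mul_mull c a b n : fps_mul (fun k => Cmul c (a k)) b n = Cmul c (fps_mul a b n).
Proof. unfold fps_mul. rewrite csum_mull. apply csum_ext. intros. Cring. Qed.

Lemma fps_mul_scalr r a b n : fps_mul a (fun k => Cscal r (b k)) n = Cscal r (fps_mul a b n).
Proof. unfold fps_mul. rewrite csum_scal. apply csum_ext. intros. Cring. Qed.

Lemma fps_mul_pow0_l b a n : fps_mul (fps_pow b 0) a n = a n.
Proof.
  unfold fps_mul. rewrite csum_first.
  - simpl. rewrite Nat.sub_0_r. Cring.
  - intros [|i] Hi; [lia|]. simpl. Cring.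
Qed.

Lemma fps_deriv_mul a b n :
  fps_deriv (fps_mul a b) n = Cadd (fps_mul (fps_deriv a) b n) (fps_mul a (fps_deriv b) n).
Proof.
  unfold fps_deriv at 1, fps_mul. rewrite csum_scal.
  rewrite (csum_ext _ (fun i => Cadd (Cscal (INR i) (Cmul (a i) (b (S n - i)%nat)))
                                     (Cscal (INR (S n - i)) (Cmul (a i) (b (S n - i)%nat)))))
    by (intros i Hi; rewrite minus_INR by lia; Cring).
  rewrite csum_add. f_equal.
  - rewrite csumS_l. simpl INR at 1.
    transitivity (csum (fun i => Cscal (INR (S i)) (Cmul (a (S i)) (b (S n - S i)%nat))) n);
      [Cring|].
    apply csum_ext. intros. unfold fps_deriv.
    replace (S n - S i)%nat with (n - i)%nat by lia. Cring.
  - cbn [csum]. rewrite Nat.sub_diag. simpl INR at 2.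
    transitivity (csum (fun i => Cscal (INR (S n - i)) (Cmul (a i) (b (S n - i)%nat))) n);
      [Cring|].
    apply csum_ext. intros. unfold fps_deriv.
    replace (S n - i)%nat with (S (n - i)) by lia. Cring.
Qed.

Lemma fps_mulX_mul_l a b n : fps_mulX (fps_mul a b) n = fps_mul (fps_mulX a) b n.
Proof.
  destruct n as [|n]; unfold fps_mul; simpl fps_mulX.
  - simpl. Cring.
  - rewrite csumS_l. simpl. Cring.
Qed.

Lemma fps_mulX_mul_r a b n : fps_mulX (fps_mul a b) n = fps_mul a (fps_mulX b) n.
Proof.
  destruct n as [|n]; unfold fps_mul; [simpl; Cring|].
  cbn [fps_mulX csum]. rewrite Nat.sub_diag.
  transitivity (Cadd (csum (fun i => Cmul (a i) (b (n - i)%nat)) n) C0); [Cring|].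
  f_equal; [|simpl; Cring].
  apply csum_ext. intros. replace (S n - i)%nat with (S (n - i)) by lia. reflexivity.
Qed.

Lemma fps_omX_deriv_mul a b n :
  fps_omX_deriv (fps_mul a b) n =
  Cadd (fps_mul (fps_omX_deriv a) b n) (fps_mul a (fps_omX_deriv b) n).
Proof.
  unfold fps_omX_deriv at 1. rewrite fps_deriv_mul.
  assert (Hshift : fps_mulX (fps_deriv (fps_mul a b)) n =
    Cadd (fps_mulX (fps_mul (fps_deriv a) b) n) (fps_mulX (fps_mul a (fps_deriv b)) n)).
  { destruct n; simpl; [Cring|apply fps_deriv_mul]. }
  rewrite Hshift, fps_mulX_mul_l, fps_mulX_mul_r.
  unfold fps_omX_deriv. rewrite fps_mul_subl, fps_mul_subr. Cring.
Qed.

Lemma fps_omX_deriv_coef a n :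
  Cscal (INR (S n)) (a (S n)) = Cadd (fps_omX_deriv a n) (Cscal (INR n) (a n)).
Proof. unfold fps_omX_deriv, fps_deriv. destruct n; simpl fps_mulX; simpl INR; Cring. Qed.

Lemma fps_omX_deriv_pow0 b n : fps_omX_deriv (fps_pow b 0) n = C0.
Proof. unfold fps_omX_deriv, fps_deriv. destruct n; simpl; Cring. Qed.

Lemma fps_deriv_mlog1m n : fps_deriv fps_mlog1m n = C1.
Proof.
  unfold fps_deriv, fps_mlog1m. apply Cx_eq; autorewrite with cx; [|ring].
  field. apply not_0_INR. lia.
Qed.

Lemma fps_omX_deriv_mlog1m n : fps_omX_deriv fps_mlog1m n = fps_pow fps_mlog1m 0 n.
Proof.
  unfold fps_omX_deriv. rewrite fps_deriv_mlog1m.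
  destruct n; simpl fps_mulX; [|rewrite fps_deriv_mlog1m]; simpl; Cring.
Qed.

Lemma fps_omX_deriv_mlog1m_pow m n :
  fps_omX_deriv (fps_pow fps_mlog1m m) n = Cscal (INR m) (fps_pow fps_mlog1m (m - 1) n).
Proof.
  revert n. induction m as [|m IH]; intros n.
  - rewrite fps_omX_deriv_pow0. simpl INR. Cring.
  - cbn [fps_pow]. rewrite fps_omX_deriv_mul.
    rewrite (fps_mul_ext _ (fps_pow fps_mlog1m 0) _ (fps_pow fps_mlog1m m)),
      fps_mul_pow0_l by (intros; auto using fps_omX_deriv_mlog1m).
    rewrite (fps_mul_ext _ fps_mlog1m _ (fun k => Cscal (INR m) (fps_pow fps_mlog1m (m - 1) k)))
      by auto.
    rewrite fps_mul_scalr. replace (S m - 1)%nat with m by lia.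
    destruct m as [|m]; [simpl; Cring|].
    replace (S m - 1)%nat with m by lia. rewrite (S_INR (S m)). cbn [fps_pow]. Cring.
Qed.

Section WeightedStirling.

Variable x : Cx.

(* [(1-t)^(-x) (-ln(1-t))^m]; its n-th coefficient is [m! S1w n m x / n!]. *)
Definition weighted_gf (m : nat) : nat -> Cx :=
  fps_mul (fps_binom_neg x) (fps_pow fps_mlog1m m).

Lemma fps_omX_deriv_binom_neg n :
  fps_omX_deriv (fps_binom_neg x) n = Cmul x (fps_binom_neg x n).
Proof.
  assert (Hderiv : forall k, fps_deriv (fps_binom_neg x) k =
                             Cmul (Cadd x (RtoC (INR k))) (fps_binom_neg x k)).
  { intros k. unfold fps_deriv, fps_binom_neg, cfall. cbn [cprod].
    change (fact (S k)) with (S k * fact k)%nat. rewrite mult_INR.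
    pose proof (INR_fact_neq_0 k). pose proof (not_0_INR (S k) ltac:(lia)).
    simpl pow. apply Cx_eq; autorewrite with cx; field; auto. }
  unfold fps_omX_deriv. rewrite Hderiv.
  destruct n; simpl fps_mulX; unfold fps_deriv; simpl INR; Cring.
Qed.

Lemma weighted_gf_succ m n :
  Cscal (INR (S n)) (weighted_gf m (S n)) =
  Cadd (Cmul (Cadd x (RtoC (INR n))) (weighted_gf m n)) (Cscal (INR m) (weighted_gf (m - 1) n)).
Proof.
  rewrite fps_omX_deriv_coef. unfold weighted_gf. rewrite fps_omX_deriv_mul.
  rewrite (fps_mul_ext _ (fun k => Cmul x (fps_binom_neg x k)) _ (fps_pow fps_mlog1m m)),
    (fps_mul_ext (fps_binom_neg x) (fps_binom_neg x) _
       (fun k => Cscal (INR m) (fps_pow fps_mlog1m (m - 1) k)))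
    by (intros; auto using fps_omX_deriv_binom_neg, fps_omX_deriv_mlog1m_pow).
  rewrite fps_mul_mull, fps_mul_scalr. Cring.
Qed.

Lemma S1wE n m : S1w n m x = Cscal (INR (fact n) / INR (fact m)) (weighted_gf m n).
Proof. reflexivity. Qed.

Lemma S1w_succ n m :
  S1w (S n) m x = Cscal (INR (fact n) / INR (fact m)) (Cscal (INR (S n)) (weighted_gf m (S n))).
Proof.
  rewrite S1wE. change (fact (S n)) with (S n * fact n)%nat. rewrite mult_INR.
  unfold Rdiv. Cring.
Qed.

Lemma S1w_S_0 n : S1w (S n) 0 x = Cmul (Cadd x (RtoC (INR n))) (S1w n 0 x).
Proof. rewrite S1w_succ, weighted_gf_succ, S1wE. simpl INR. Cring. Qed.

Lemma S1w_S_S n m :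
  S1w (S n) (S m) x = Cadd (Cmul (Cadd x (RtoC (INR n))) (S1w n (S m) x)) (S1w n m x).
Proof.
  rewrite S1w_succ, weighted_gf_succ, Nat.sub_succ, Nat.sub_0_r, !S1wE.
  change (fact (S m)) with (S m * fact m)%nat. rewrite mult_INR.
  pose proof (INR_fact_neq_0 m). pose proof (not_0_INR (S m) ltac:(lia)).
  apply Cx_eq; autorewrite with cx; field; auto.
Qed.

Lemma rising_factorial_S1w y n :
  cprod (fun i => Cadd (Cadd x y) (RtoC (INR i))) n =
  csum (fun m => Cmul (S1w n m x) (Cpow y m)) n.
Proof.
  transitivity (cprod (fun i => Cadd y (Cadd x (RtoC (INR i)))) n).
  { f_equal. apply functional_extensionality. intros. Cring. }
  apply (cprod_linear_factors (fun i => Cadd x (RtoC (INR i))) (fun n m => S1w n m x)).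
  - unfold S1w, fps_mul, fps_binom_neg, cfall. simpl. apply Cx_eq; autorewrite with cx; field.
  - intros m. unfold S1w, fps_pow, fps_mul. simpl. Cring.
  - apply S1w_S_0.
  - apply S1w_S_S.
Qed.

End WeightedStirling.

Lemma cfall_rising w n :
  cfall w n = Cscal ((-1) ^ n) (cprod (fun i => Cadd (Copp w) (RtoC (INR i))) n).
Proof.
  unfold cfall. induction n as [|n IH]; cbn [cprod]; [simpl; Cring|].
  rewrite IH. simpl pow. Cring.
Qed.

Lemma cfall_stirling_expansion rho z n P :
  cfall (Cscal (/ rho) (Cadd (RtoC (- P)) z)) n =
  monomial_sum n (fun m => m) (fun m i => (m - i)%nat)
    (fun m i => Cscal ((-1) ^ n * INR (S1 n m) * (/ rho) ^ m * Binomial.C m i)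
                      (Cpow (Copp z) i)) P.
Proof.
  rewrite cfall_rising.
  replace (Copp (Cscal (/ rho) (Cadd (RtoC (- P)) z)))
    with (Cscal (/ rho) (Cadd (Copp z) (RtoC P))) by Cring.
  rewrite rising_factorial_S1, csum_scal. apply csum_ext. intros m _.
  rewrite Cpow_scal, Cpow_add_binomial, !Cscal_Cscal, csum_scal.
  apply csum_ext. intros i _. rewrite !Cscal_Cscal. f_equal. ring.
Qed.

Lemma cfall_weighted_stirling_expansion rho z n P :
  cfall (Cscal (/ rho) (Cadd (RtoC (- P)) z)) n =
  monomial_sum n (fun _ => 0%nat) (fun m _ => m)
    (fun m _ => Cscal ((-1) ^ n * (/ rho) ^ m) (S1w n m (Cscal (- / rho) z))) P.
Proof.
  rewrite cfall_rising.
  replace (Copp (Cscal (/ rho) (Cadd (RtoC (- P)) z)))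
    with (Cadd (Cscal (- / rho) z) (RtoC (P * / rho))) by Cring.
  rewrite rising_factorial_S1w, csum_scal. apply csum_ext. intros m _.
  simpl csum. rewrite Cpow_RtoC, Rpow_mult_distr. Cring.
Qed.

Lemma pow_mul_inv_pow r n m : r <> 0 -> (m <= n)%nat -> r ^ n * (/ r) ^ m = r ^ (n - m).
Proof.
  intros Hr Hmn. replace n with ((n - m) + m)%nat at 1 by lia.
  rewrite pow_add, pow_inv. field. apply pow_nonzero, Hr.
Qed.

Theorem theorem4 (n k : nat) (rho q : R) (z : Cx) :
  (1 <= k)%nat -> rho <> 0 -> 0 <= q < 1 ->
  qpolyCauchy2 n rho q k z =
    Cscal ((-1) ^ n)
      (csum (fun m =>
         Cscal (INR (S1 n m) * rho ^ (n - m))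
           (csum (fun i =>
              Cscal (Binomial.C m i / (qnum q (m - i + 1)) ^ k) (Cpow (Copp z) i)) m)) n)
  /\
  qpolyCauchy2 n rho q k z =
    Cscal ((-1) ^ n)
      (csum (fun m =>
         Cscal (rho ^ (n - m) / (qnum q (m + 1)) ^ k)
           (S1w n m (Cscal (- / rho) z))) n).
Proof.
  intros _ Hrho Hq. unfold qpolyCauchy2. split.
  - rewrite (functional_extensionality _ _
      (fun xs => cfall_stirling_expansion rho z n (prodl xs))).
    rewrite qmint_monomial_sum, !csum_scal by exact Hq.
    apply csum_ext. intros m Hm. rewrite !Cscal_Cscal, !csum_scal.
    apply csum_ext. intros i _. rewrite !Cscal_Cscal. f_equal.
    rewrite <- (pow_mul_inv_pow rho n m Hrho Hm). unfold Rdiv. ring.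
  - rewrite (functional_extensionality _ _
      (fun xs => cfall_weighted_stirling_expansion rho z n (prodl xs))).
    rewrite qmint_monomial_sum, !csum_scal by exact Hq.
    apply csum_ext. intros m Hm. simpl csum. rewrite !Cscal_Cscal. f_equal.
    rewrite <- (pow_mul_inv_pow rho n m Hrho Hm). unfold Rdiv. ring.
Qed.
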